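(* Let $\lambda>0$, $\omega_0\ne0$ with $\omega_0^2/(2\lambda)<2$, and let $\tilde{\mathbf r}_\lambda(t,\omega_0)$ be the trajectory defined in the context. Then at every time $t\ge0$ the minimum possible root-mean-square size of the system for its current cohesion is achieved: with $\varphi=\varphi(t)$, $$b(\varphi)=\frac{C(\mathbf m)}{f(\varphi)\sqrt{\sum_jm_j}}=\min\{b(\mathbf r):\ \mathbf r\in\mathfrak R,\ f(\mathbf r)=f(\varphi)\},$$ where $b(\varphi)$ and $f(\varphi)$ are the root-mean-square size and the cohesion of the system at time $t$.
   Context: Fix $N\ge2$, masses $\mathbf m=(m_1,\dots,m_N)$, $m_i>0$, $\gamma>0$. Planar configuration space $\mathfrak R=\{\mathbf r=(\mathbf r_1,\dots,\mathbf r_N)\in(\mathbb R^2)^N:\ \mathbf r_i\neq\mathbf r_j \text{ for } i\neq j\}$; cohesion $f(\mathbf r)=\sum_{i<j}\frac{\gamma m_im_j}{|\mathbf r_j-\mathbf r_i|}$; $g(\mathbf r)=\sum_i m_i|\mathbf r_i|^2$; root-mean-square size $b(\mathbf r)=\sqrt{g(\mathbf r)/\sum_jm_j}$; $C(\mathbf m)=\min\{f(\mathbf r):\mathbf r\in\mathfrak R,\ g(\mathbf r)=1\}$. Let $\mathbf r_\lambda=(\mathbf r_{1\lambda},\dots,\mathbf r_{N\lambda})$ be a global minimizer of $f+\lambda g$ on $\mathfrak R$; identify $\mathbb R^2$ with $\mathbb C$, $z_{j\lambda}\leftrightarrow\mathbf r_{j\lambda}$. Put $e=1-\omega_0^2/(2\lambda)$,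 $a(\varphi)=(1-e)/(1-e\cos\varphi)$, and define $\varphi(t)$ by $\omega_0t=\int_0^{\varphi(t)}\frac{(1-e)^2\,d\alpha}{(1-e\cos\alpha)^2}$. The trajectory $\tilde{\mathbf r}_\lambda(t,\omega_0)$ has $j$-th particle at complex position $z_{j\lambda}a(\varphi(t))e^{i\varphi(t)}$. *)

(* Planar positions are Coquelicot complex
   numbers C = R*R (R^2 identified with C). Configurations are functions
   nat -> C of which only the indices 0..N-1 matter. *)
From Stdlib Require Import Reals.
From Coquelicot Require Import Coquelicot.
Open Scope R_scope.

Fixpoint rsum (n : nat) (F : nat -> R) : R :=
  match n with O => 0 | S k => rsum k F + F k end.

Definition config (N : nat) (r : nat -> C) : Prop :=
  forall i j, (i < N)%nat -> (j < N)%nat -> i <> j -> r i <> r j.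

Definition cohesion (N : nat) (m : nat -> R) (gamma : R) (r : nat -> C) : R :=
  rsum N (fun j => rsum j (fun i => gamma * m i * m j / Cmod (Cminus (r j) (r i)))).

Definition gmom (N : nat) (m : nat -> R) (r : nat -> C) : R :=
  rsum N (fun i => m i * (Cmod (r i)) ^ 2).

Definition rms (N : nat) (m : nat -> R) (r : nat -> C) : R :=
  sqrt (gmom N m r / rsum N m).

(* C(m) = min { f(r) : r in \mathfrak R, g(r) = 1 }, taken as the greatest lower
   bound (it is attained) *)
Definition Cmin (N : nat) (m : nat -> R) (gamma : R) : R :=
  real (Glb_Rbar (fun x => exists r, config N r /\ gmom N m r = 1 /\
                                    cohesion N m gamma r = x)).

Definition global_minimizer (N : nat) (m : nat -> R) (gamma lambda : R)
    (r : nat -> C) : Prop :=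
  config N r /\
  forall r', config N r' ->
    cohesion N m gamma r + lambda * gmom N m r
      <= cohesion N m gamma r' + lambda * gmom N m r'.

Definition is_min_of (S : R -> Prop) (x : R) : Prop :=
  S x /\ forall y, S y -> x <= y.

Definition ecc (lambda omega0 : R) : R := 1 - omega0 ^ 2 / (2 * lambda).

Definition afun (e phi : R) : R := (1 - e) / (1 - e * cos phi).

(* integrand defining phi(t): omega0 t = int_0^phi (1-e)^2/(1-e cos a)^2 da *)
Definition phi_integrand (e alpha : R) : R := (1 - e) ^ 2 / (1 - e * cos alpha) ^ 2.

Definition traj (e : R) (z : nat -> C) (phi : R) : nat -> C :=
  fun j => Cmult (z j) (Cmult (RtoC (afun e phi)) (cos phi, sin phi)).

(** A global minimizer [rl] of [f + lambda g] also minimizes the scale-invariant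
    product [f * sqrt g] over all configurations: rescale any competitor so that
    its [g] equals [g rl]; the [lambda g] terms then cancel.  Consequently
    [C(m) = f rl * sqrt (g rl)].  The trajectory is a rotated dilation of [rl],
    so it still realises this minimal product, and since [b = sqrt (g / sum m)]
    every configuration with the same cohesion has at least its size. *)

From Stdlib Require Import Reals Lra Lia Psatz.
From Coquelicot Require Import Coquelicot.
Open Scope R_scope.

Lemma rsum_ext n F G :
  (forall i, (i < n)%nat -> F i = G i) -> rsum n F = rsum n G.
Proof.
  induction n as [|n IH]; simpl; intros H; [reflexivity|].
  rewrite IH by (intros; apply H; lia). rewrite H by lia. reflexivity.
Qed.

Lemma rsum_scal n k F : rsum n (fun i => k * F i) = k * rsum n F.
Proof. induction n as [|n IH]; simpl; [ring|]. rewrite IH; ring. Qed.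

Lemma rsum_nonneg n F : (forall i, (i < n)%nat -> 0 <= F i) -> 0 <= rsum n F.
Proof.
  induction n as [|n IH]; simpl; intros H; [lra|].
  assert (0 <= rsum n F) by (apply IH; intros; apply H; lia).
  assert (0 <= F n) by (apply H; lia). lra.
Qed.

Lemma rsum_pos n F k :
  (k < n)%nat -> (forall i, (i < n)%nat -> 0 <= F i) -> 0 < F k -> 0 < rsum n F.
Proof.
  induction n as [|n IH]; simpl; intros Hk H Hpos; [lia|].
  assert (0 <= F n) by (apply H; lia).
  destruct (Nat.eq_dec k n) as [->|Hne].
  - assert (0 <= rsum n F) by (apply rsum_nonneg; intros; apply H; lia). lra.
  - assert (0 < rsum n F) by (apply IH; [lia | intros; apply H; lia | exact Hpos]).
    lra.
Qed.

Definition scale (r : nat -> C) (c : C) : nat -> C := fun j => Cmult (r j) c.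

Definition cohesion_size (N : nat) (m : nat -> R) (gamma : R) (r : nat -> C) : R :=
  cohesion N m gamma r * sqrt (gmom N m r).

Section Scaling.

Variables (N : nat) (m : nat -> R) (gamma : R).

Lemma gmom_scale r (c : C) : gmom N m (scale r c) = Cmod c ^ 2 * gmom N m r.
Proof.
  unfold gmom, scale. rewrite <- rsum_scal. apply rsum_ext; intros.
  rewrite Cmod_mult. ring.
Qed.

Lemma cohesion_scale r (c : C) :
  cohesion N m gamma (scale r c) = / Cmod c * cohesion N m gamma r.
Proof.
  unfold cohesion, scale. rewrite <- rsum_scal. apply rsum_ext; intros j _.
  rewrite <- rsum_scal. apply rsum_ext; intros i _.
  replace (Cminus (Cmult (r j) c) (Cmult (r i) c))
    with (Cmult (Cminus (r j) (r i)) c) by (unfold Cminus; ring).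
  rewrite Cmod_mult. unfold Rdiv. rewrite Rinv_mult. ring.
Qed.

Lemma cohesion_size_scale r (c : C) :
  c <> 0%C -> cohesion_size N m gamma (scale r c) = cohesion_size N m gamma r.
Proof.
  intros Hc. apply Cmod_gt_0 in Hc.
  unfold cohesion_size. rewrite cohesion_scale, gmom_scale.
  rewrite sqrt_mult_alt by (apply pow2_ge_0).
  rewrite <- Rsqr_pow2, sqrt_Rsqr by lra. field. lra.
Qed.

Lemma config_scale r (c : C) : c <> 0%C -> config N r -> config N (scale r c).
Proof.
  unfold config, scale. intros Hc H i j Hi Hj Hij E.
  apply (H i j Hi Hj Hij).
  rewrite <- (Cmult_1_r (r i)), <- (Cmult_1_r (r j)), <- (Cinv_r c Hc).
  rewrite !Cmult_assoc, E. reflexivity.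
Qed.

End Scaling.

Section Positivity.

Variables (N : nat) (m : nat -> R) (gamma : R).
Hypothesis HN : (2 <= N)%nat.
Hypothesis Hm : forall i, (i < N)%nat -> 0 < m i.
Hypothesis Hgamma : 0 < gamma.

Lemma mass_pos : 0 < rsum N m.
Proof. apply rsum_pos with 0%nat; [lia | intros; left; auto | apply Hm; lia]. Qed.

Lemma gmom_pos r : config N r -> 0 < gmom N m r.
Proof.
  intros Hr.
  assert (Hk : exists k, (k < N)%nat /\ r k <> 0%C).
  { destruct (Ceq_dec (r 0%nat) 0) as [E|E].
    - exists 1%nat. split; [lia|]. rewrite <- E. apply Hr; lia.
    - exists 0%nat. split; [lia | exact E]. }
  destruct Hk as [k [Hk Hrk]].
  apply rsum_pos with k; [exact Hk | |].
  - intros i Hi. apply Rmult_le_pos; [left; auto | apply pow2_ge_0].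
  - apply Rmult_lt_0_compat; [auto|]. apply pow_lt, Cmod_gt_0, Hrk.
Qed.

Lemma cohesion_pos r : config N r -> 0 < cohesion N m gamma r.
Proof.
  intros Hr.
  assert (Hterm : forall j i, (j < N)%nat -> (i < j)%nat ->
            0 < gamma * m i * m j / Cmod (Cminus (r j) (r i))).
  { intros j i Hj Hi.
    assert (Hd : Cminus (r j) (r i) <> 0%C).
    { intro E. apply (Hr j i); [lia | lia | lia |].
      rewrite <- (Cplus_0_r (r i)), <- E. unfold Cminus. ring. }
    apply Rdiv_lt_0_compat; [| apply Cmod_gt_0, Hd].
    repeat apply Rmult_lt_0_compat; auto; apply Hm; lia. }
  apply rsum_pos with 1%nat; [lia | |].
  - intros j Hj. apply rsum_nonneg. intros i Hi. left. apply Hterm; lia.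
  - simpl. rewrite Rplus_0_l. apply Hterm; lia.
Qed.

Lemma rms_eq_cohesion_size r :
  config N r ->
  rms N m r = cohesion_size N m gamma r / (cohesion N m gamma r * sqrt (rsum N m)).
Proof.
  intros Hr.
  pose proof (cohesion_pos r Hr). pose proof (sqrt_lt_R0 _ mass_pos).
  unfold rms, cohesion_size. rewrite sqrt_div_alt by exact mass_pos.
  field. lra.
Qed.

Section Minimizer.

Variables (lambda : R) (rl : nat -> C).
Hypothesis Hmin : global_minimizer N m gamma lambda rl.

Lemma minimizer_cohesion_size_le r :
  config N r -> cohesion_size N m gamma rl <= cohesion_size N m gamma r.
Proof.
  intros Hr. destruct Hmin as [Hrl Hle].
  pose proof (sqrt_lt_R0 _ (gmom_pos rl Hrl)) as Hsl.
  pose proof (sqrt_lt_R0 _ (gmom_pos r Hr)) as Hs.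
  set (s := sqrt (gmom N m rl) / sqrt (gmom N m r)).
  assert (Hcm : Cmod (RtoC s) = s).
  { rewrite Cmod_R. apply Rabs_pos_eq. left. apply Rdiv_lt_0_compat; auto. }
  assert (Hc : RtoC s <> 0%C).
  { apply Cmod_gt_0. rewrite Hcm. apply Rdiv_lt_0_compat; auto. }
  assert (Hg : gmom N m (scale r s) = gmom N m rl).
  { rewrite gmom_scale, Hcm. unfold s.
    rewrite <- Rsqr_pow2, Rsqr_div', !Rsqr_sqrt by (left; apply gmom_pos; auto).
    field. apply Rgt_not_eq, gmom_pos, Hr. }
  pose proof (Hle _ (config_scale N r _ Hc Hr)) as Hcompare. rewrite Hg in Hcompare.
  rewrite <- (cohesion_size_scale N m gamma r s Hc).
  unfold cohesion_size. rewrite Hg.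
  apply Rmult_le_compat_r; lra.
Qed.

Lemma Cmin_minimizer : Cmin N m gamma = cohesion_size N m gamma rl.
Proof.
  destruct Hmin as [Hrl _].
  unfold Cmin. rewrite (is_glb_Rbar_unique _ (Finite (cohesion_size N m gamma rl)));
    [reflexivity | split].
  - intros x [r [Hr [Hg <-]]]. simpl.
    replace (cohesion N m gamma r) with (cohesion_size N m gamma r)
      by (unfold cohesion_size; rewrite Hg, sqrt_1; ring).
    apply minimizer_cohesion_size_le, Hr.
  - intros b Hb. apply Hb.
    pose proof (sqrt_lt_R0 _ (gmom_pos rl Hrl)) as Hs.
    set (c := RtoC (/ sqrt (gmom N m rl))).
    assert (Hcm : Cmod c = / sqrt (gmom N m rl)).
    { unfold c. rewrite Cmod_R. apply Rabs_pos_eq. left. apply Rinv_0_lt_compat, Hs. }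
    assert (Hc : c <> 0%C).
    { apply Cmod_gt_0. rewrite Hcm. apply Rinv_0_lt_compat, Hs. }
    assert (Hg : gmom N m (scale rl c) = 1).
    { rewrite gmom_scale, Hcm, pow_inv, <- Rsqr_pow2, Rsqr_sqrt
        by (left; apply gmom_pos, Hrl).
      field. apply Rgt_not_eq, gmom_pos, Hrl. }
    exists (scale rl c). split; [apply config_scale; auto | split; [exact Hg|]].
    rewrite <- (cohesion_size_scale N m gamma rl c Hc).
    unfold cohesion_size. rewrite Hg, sqrt_1. ring.
Qed.

End Minimizer.

End Positivity.

Lemma ecc_bounds lambda omega0 :
  0 < lambda -> omega0 <> 0 -> omega0 ^ 2 / (2 * lambda) < 2 ->
  -1 < ecc lambda omega0 < 1.
Proof.
  intros Hl Hw Hq. unfold ecc.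
  assert (0 < omega0 ^ 2 / (2 * lambda)).
  { apply Rdiv_lt_0_compat; [apply pow2_gt_0, Hw | lra]. }
  lra.
Qed.

Lemma afun_pos e phi : -1 < e < 1 -> 0 < afun e phi.
Proof.
  intros He. unfold afun. pose proof (COS_bound phi).
  apply Rdiv_lt_0_compat; [lra|].
  destruct (Rle_dec 0 e); nra.
Qed.

Lemma Cmod_polar a phi : Cmod (Cmult (RtoC a) (cos phi, sin phi)) = Rabs a.
Proof.
  rewrite Cmod_mult, Cmod_R.
  assert (Hunit : Cmod (cos phi, sin phi) = 1).
  { unfold Cmod. simpl. rewrite <- sqrt_1 at 3. f_equal.
    pose proof (sin2_cos2 phi). unfold Rsqr in *. lra. }
  rewrite Hunit. ring.
Qed.

Theorem theorem8p4 (N : nat) (m : nat -> R) (gamma lambda omega0 : R)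
    (rl : nat -> C) :
  (2 <= N)%nat ->
  (forall i, (i < N)%nat -> 0 < m i) ->
  0 < gamma ->
  0 < lambda ->
  omega0 <> 0 ->
  omega0 ^ 2 / (2 * lambda) < 2 ->
  global_minimizer N m gamma lambda rl ->
  forall t phi : R,
    0 <= t ->
    omega0 * t = RInt (phi_integrand (ecc lambda omega0)) 0 phi ->
    let r := traj (ecc lambda omega0) rl phi in
    rms N m r = Cmin N m gamma / (cohesion N m gamma r * sqrt (rsum N m)) /\
    is_min_of (fun x => exists r', config N r' /\
                                   cohesion N m gamma r' = cohesion N m gamma r /\
                                   x = rms N m r')
              (rms N m r).
Proof.
  intros HN Hm Hgamma Hl Hw Hq Hmin t phi _ _ r.
  set (c := Cmult (RtoC (afun (ecc lambda omega0) phi)) (cos phi, sin phi)).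
  assert (Hc : c <> 0%C).
  { apply Cmod_gt_0. unfold c. rewrite Cmod_polar.
    apply Rabs_pos_lt, Rgt_not_eq, afun_pos, ecc_bounds; auto. }
  assert (Hr : config N r) by (apply (config_scale N rl c Hc), (proj1 Hmin)).
  assert (Hsize : cohesion_size N m gamma r = Cmin N m gamma).
  { rewrite (Cmin_minimizer N m gamma HN Hm lambda rl Hmin).
    apply (cohesion_size_scale N m gamma rl c Hc). }
  split; [rewrite <- Hsize; apply rms_eq_cohesion_size; auto | split].
  - exists r. auto.
  - intros y [r' [Hr' [Hf ->]]].
    rewrite !(rms_eq_cohesion_size N m gamma HN Hm Hgamma) by assumption.
    rewrite Hf, Hsize, (Cmin_minimizer N m gamma HN Hm lambda rl Hmin).
    apply Rmult_le_compat_r.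
    + left. apply Rinv_0_lt_compat, Rmult_lt_0_compat;
        [apply cohesion_pos | apply sqrt_lt_R0, mass_pos]; auto.
    + apply (minimizer_cohesion_size_le N m gamma HN Hm lambda rl Hmin r' Hr').
Qed.
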